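(* Let $n_{\max}$ be a parameter, let $W$ be a (sufficiently large) power-of-two polynomial in $n_{\max}$, and let $h : [U] \to [W]$ be the tabulation weight function defined as follows. Write each key $x \in [U]$ as $x = x_{\mathrm{high}} \cdot W^4 + x_{\mathrm{mid}} \cdot W + x_{\mathrm{low}}$ with $x_{\mathrm{low}} \in [W]$, $x_{\mathrm{mid}} \in [W^3]$, and set $x_{\mathrm{midlow}} = x_{\mathrm{mid}} \cdot W + x_{\mathrm{low}} \in [W^4]$. Let $A_1,\dots,A_{m}$, with $m = \operatorname{poly}(W)$, be independent random arrays of length $W^4$, each of which is the concatenation of $W^3$ independent uniformly random permutations of $[W]$, and let $f : [U/W^4] \to [m]$ be a random function drawn from a pairwise-independent family (independently of the arrays). Define $h(x) = A_{f(x_{\mathrm{high}})}[x_{\mathrm{midlow}}]$. Then for any set $S = \{x_1,\dots,x_n\} \subseteq [U]$ of $n \le n_{\max}$ keys, with probability at least $1 - 1/\operatorname{poly}(n_{\max})$ (over the random choice of the arrays and $f$), the weights $h(x_1),\dots,h(x_n)$ are pairwise distinct.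
   Context: $[k]$ denotes $\{0,1,\dots,k-1\}$. The number $m$ of arrays is a sufficiently large polynomial in $W$, so that two distinct inputs collide under the pairwise-independent $f$ with probability at most $1/\operatorname{poly}(W)$. *)

From HB Require Import structures.
From mathcomp Require Export all_boot all_order all_algebra all_fingroup.
Set Implicit Arguments. Unset Strict Implicit. Unset Printing Implicit Defensive.
Import Order.TTheory GRing.Theory Num.Theory.

Definition perm_app (n : nat) (p : {perm 'I_n}) (j : nat) : nat :=
  if (insub j : option 'I_n) is Some o then val (p o) else j.

(* An array of length W^4 given as the concatenation of W^3 permutations of
   [W]: entry i is (permutation number i / W) applied to (i mod W). *)
Definition arr_get (W : nat) (A : {ffun 'I_(W ^ 3) -> {perm 'I_W}}) (i : nat) : nat :=
  if (insub (i %/ W) : option 'I_(W ^ 3)) is Some b then perm_app (A b) (i %% W)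
  else 0.

Definition tab_hash (W m K : nat)
    (A : {ffun 'I_m -> {ffun 'I_(W ^ 3) -> {perm 'I_W}}})
    (f : {ffun 'I_K -> 'I_m}) (x : nat) : nat :=
  if (insub (x %/ W ^ 4) : option 'I_K) is Some hi then arr_get (A (f hi)) (x %% W ^ 4)
  else 0.

(* A pairwise-independent family of functions [K] -> [m], given as a finite
   (multi)set indexed by I, drawn uniformly: each f(a) is uniform on [m] and
   for a <> b the pair (f(a), f(b)) is uniform on [m]^2. *)
Definition pairwise_indep (K m : nat) (I : finType) (fam : I -> {ffun 'I_K -> 'I_m}) : Prop :=
  [/\ 0 < #|I|,
      (forall (a : 'I_K) (i : 'I_m), #|[pred t | fam t a == i]| * m = #|I|) &
      (forall (a b : 'I_K), a != b -> forall (i j : 'I_m),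
          #|[pred t | (fam t a == i) && (fam t b == j)]| * m ^ 2 = #|I|)].

Definition unif_prob (T : finType) (E : pred T) : rat :=
  (#|[pred t | E t]|%:R / #|T|%:R)%R.

(* Fix distinct keys x and y, and call (f(x_high), x_mid) the slot of x: it
   names the permutation that produces h(x).  If x and y share a slot, then
   x_high <> y_high (otherwise x_low <> y_low and the permutation separates
   them), so the slot is shared only if f collides on two distinct points,
   which has probability 1/m <= 1/W.  If the slots differ, composing the
   permutation in x's slot with a transposition is a bijection of the sample
   space that moves h(x) to any value while fixing h(y); hence h(x) = h(y)
   with probability at most 1/W.  A union bound over the at most n_max^2
   pairs bounds the failure probability by 2 n_max^2 / W <= n_max^-d as soon
   as W >= n_max^(d+3). *)

Import Order.TTheory GRing.Theory Num.Theory.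

Set Implicit Arguments.
Unset Strict Implicit.
Unset Printing Implicit Defensive.

(* (t, u) |-> act (X t <-> u) t is injective on the event times 'I_W: X of
   the image is u, and Y of the image is Y t = X t, which determines the
   transposition to undo. *)
Lemma card_equivariant_eq_mul_le (T : finType) (W : nat) (P : pred T)
    (X Y : T -> 'I_W) (act : {perm 'I_W} -> T -> T) :
  (forall s, injective (act s)) ->
  (forall s t, X (act s t) = s (X t)) ->
  (forall s t, P t -> Y (act s t) = Y t) ->
  #|[set t | P t && (X t == Y t)]| * W <= #|T|.
Proof.
move=> act_inj actX actY; set D := [set t | _].
pose twist (p : T * 'I_W) := act (tperm (X p.1) p.2) p.1.
have -> : #|D| * W = #|setX D [set: 'I_W]| by rewrite cardsX cardsT card_ord.
rewrite -(card_in_imset (f := twist)) ?max_card //.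
move=> [t1 u1] [t2 u2]; rewrite !inE /= => /andP[/andP[P1 /eqP XY1] _].
move=> /andP[/andP[P2 /eqP XY2] _]; rewrite /twist /= => eq_twist.
have eq_u : u1 = u2 by move: (congr1 X eq_twist); rewrite !actX !tpermL.
have := congr1 Y eq_twist; rewrite !actY // -XY1 -XY2 => eq_X.
by move: eq_twist; rewrite eq_X eq_u => /act_inj ->.
Qed.

Lemma card_bigcup_le (T J : finType) (A : {pred J}) (E : J -> {set T}) :
  #|\bigcup_(j in A) E j| <= \sum_(j in A) #|E j|.
Proof.
apply: (big_ind2 (fun (B : {set T}) n => #|B| <= n)) => [|B b C c leB leC|//].
  by rewrite cards0.
by rewrite cardsU (leq_trans (leq_subr _ _)) ?leq_add.
Qed.

Lemma card_exists_mul_le (T J : finType) (A : {pred J}) (E : J -> pred T) (w b : nat) :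
  (forall j, j \in A -> #|[pred t | E j t]| * w <= b) ->
  #|[pred t | [exists j in A, E j t]]| * w <= #|A| * b.
Proof.
move=> leE.
have -> : #|[pred t | [exists j in A, E j t]]| = #|\bigcup_(j in A) [set t | E j t]|.
  apply: eq_card => t; rewrite !inE.
  apply/existsP/bigcupP => [[j /andP[jA Ejt]]|[j jA]]; first by exists j; rewrite ?inE.
  by rewrite inE => Ejt; exists j; rewrite jA.
apply: leq_trans (leq_mul (card_bigcup_le _ _) (leqnn w)) _.
rewrite big_distrl -sum_nat_const leq_sum // => j jA.
by rewrite cardsE leE.
Qed.

Lemma pairwise_indep_card_eq (K m : nat) (I : finType) (fam : I -> {ffun 'I_K -> 'I_m})
    (a b : 'I_K) :
  pairwise_indep fam -> a != b -> #|[set i | fam i a == fam i b]| * m = #|I|.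
Proof.
case=> /card_gt0P[i0 _] _ indep2 neq_ab.
have m_gt0 : 0 < m by apply: leq_ltn_trans (ltn_ord (fam i0 a)).
have -> : #|[set i | fam i a == fam i b]| =
          \sum_(j : 'I_m) #|[pred i | (fam i a == j) && (fam i b == j)]|.
  rewrite -sum1_card (partition_big (fun i => fam i a) xpredT) //=.
  apply: eq_bigr => j _; rewrite -sum1_card; apply: eq_bigl => i.
  rewrite !inE /=; case: eqP => [->|neq_fab]; first by rewrite andbb.
  by apply/esym/negbTE; apply: contra_notN neq_fab => /andP[/eqP-> /eqP->].
apply/eqP; rewrite -(eqn_pmul2r m_gt0) -mulnA mulnn big_distrl /=.
by rewrite (eq_bigr _ (fun j _ => indep2 _ _ neq_ab j j)) sum_nat_const card_ord mulnC.
Qed.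

Local Notation table W m := {ffun 'I_m -> {ffun 'I_(W ^ 3) -> {perm 'I_W}}}.

Lemma tab_hash_entry (W m K : nat) (x : 'I_(K * W ^ 4)) : 0 < W ->
  exists (h : 'I_K) (b : 'I_(W ^ 3)) (l : 'I_W),
    x = h * W ^ 4 + b * W + l :> nat /\
    forall A (f : {ffun 'I_K -> 'I_m}), tab_hash A f x = A (f h) b l :> nat.
Proof.
move=> W_gt0; have W4_gt0 : 0 < W ^ 4 by rewrite expn_gt0 W_gt0.
have lt_h : x %/ W ^ 4 < K by rewrite ltn_divLR // ltn_ord.
have lt_b : x %% W ^ 4 %/ W < W ^ 3 by rewrite ltn_divLR // -expnSr ltn_pmod.
have lt_l : x %% W ^ 4 %% W < W by rewrite ltn_pmod.
exists (Ordinal lt_h), (Ordinal lt_b), (Ordinal lt_l); split=> /=.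
  by rewrite -addnA -divn_eq -divn_eq.
move=> A f; rewrite /tab_hash (insubT (fun i => i < K) lt_h) /arr_get.
rewrite (insubT (fun i => i < W ^ 3) lt_b) /perm_app (insubT (fun i => i < W) lt_l).
by congr (val (A (f _) _ _)); apply: val_inj.
Qed.

Section TableEntryCollision.

Variables (W m K : nat) (I : finType) (fam : I -> {ffun 'I_K -> 'I_m}).

Local Notation sample := (table W m * I)%type.
Local Notation entry t h b l := (t.1 (fam t.2 h) b l).

Lemma card_entry_eq_other_slot (hx hy : 'I_K) (bx by_ : 'I_(W ^ 3)) (lx ly : 'I_W) :
  #|[set t : sample | ((fam t.2 hx, bx) != (fam t.2 hy, by_)) &&
                        (entry t hx bx lx == entry t hy by_ ly)]| * W <= #|{: sample}|.
Proof.
pose twist (A : table W m) j b s : table W m :=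
  [ffun j' => [ffun b' => if (j', b') == (j, b) then (A j' b' * s)%g else A j' b']].
apply: (card_equivariant_eq_mul_le (T := sample)
          (P := fun t => (fam t.2 hx, bx) != (fam t.2 hy, by_))
          (X := fun t => entry t hx bx lx) (Y := fun t => entry t hy by_ ly)
          (act := fun s t => (twist t.1 (fam t.2 hx) bx s, t.2))).
- move=> s [A i] [A' i'] [eqA eq_i]; subst i'; congr pair.
  apply/ffunP => j; apply/ffunP => b; move/ffunP/(_ j): eqA; rewrite !ffunE.
  by move/ffunP/(_ b); rewrite !ffunE; case: ifP => // _; apply: mulIg.
- by move=> s [A i]; rewrite /= !ffunE eqxx permM.
- by move=> s [A i] /= neq_slot; rewrite !ffunE eq_sym (negbTE neq_slot).
Qed.

Lemma card_entry_eq_same_slot (hx hy : 'I_K) (bx by_ : 'I_(W ^ 3)) (lx ly : 'I_W) :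
  (hx, bx, lx) != (hy, by_, ly) -> pairwise_indep fam -> W <= m ->
  #|[set t : sample | ((fam t.2 hx, bx) == (fam t.2 hy, by_)) &&
                        (entry t hx bx lx == entry t hy by_ ly)]| * W <= #|{: sample}|.
Proof.
move=> neq_keys indep leWm.
have [eq_h|neq_h] := eqVneq hx hy.
  rewrite (_ : [set t | _] = set0) ?cards0 //; apply/setP => -[A i]; rewrite !inE /=.
  apply/negbTE/andP => -[/eqP[eq_f eq_b] /eqP]; rewrite eq_f eq_b => /perm_inj eq_l.
  by move: neq_keys; rewrite eq_h eq_b eq_l eqxx.
pose collide := [set i | fam i hx == fam i hy].
apply: (@leq_trans (#|setX [set: table W m] collide| * m)).
  apply: (leq_mul _ leWm); apply: subset_leq_card; apply/subsetP => t.
  by rewrite !inE xpair_eqE => /andP[/andP[-> _] _].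
by rewrite cardsX cardsT -mulnA pairwise_indep_card_eq // card_prod.
Qed.

Lemma card_entry_eq (hx hy : 'I_K) (bx by_ : 'I_(W ^ 3)) (lx ly : 'I_W) :
  (hx, bx, lx) != (hy, by_, ly) -> pairwise_indep fam -> W <= m ->
  #|[set t : sample | entry t hx bx lx == entry t hy by_ ly]| * W <= 2 * #|{: sample}|.
Proof.
move=> neq_keys indep leWm.
set same_slot := [set t : sample | (fam t.2 hx, bx) == (fam t.2 hy, by_)].
rewrite -(cardsID same_slot) mulnDl mul2n -addnn leq_add //.
  apply: leq_trans (card_entry_eq_same_slot neq_keys indep leWm).
  by apply/eq_leq; congr (_ * W); apply: eq_card => t; rewrite !inE andbC.
apply: leq_trans (card_entry_eq_other_slot hx hy bx by_ lx ly).
by apply/eq_leq; congr (_ * W); apply: eq_card => t; rewrite !inE andbC.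
Qed.

Lemma card_tab_hash_eq (x y : 'I_(K * W ^ 4)) :
  0 < W -> W <= m -> pairwise_indep fam -> x != y ->
  #|[set t : sample | tab_hash t.1 (fam t.2) x == tab_hash t.1 (fam t.2) y]| * W
    <= 2 * #|{: sample}|.
Proof.
move=> W_gt0 leWm indep neq_xy.
have [hx [bx [lx [def_x hash_x]]]] := tab_hash_entry m x W_gt0.
have [hy [by_ [ly [def_y hash_y]]]] := tab_hash_entry m y W_gt0.
have neq_keys : (hx, bx, lx) != (hy, by_, ly).
  apply: contraNneq neq_xy => -[eq_h eq_b eq_l].
  by rewrite -val_eqE /= def_x def_y eq_h eq_b eq_l.
apply: leq_trans (card_entry_eq neq_keys indep leWm).
by apply/eq_leq; congr (_ * W); apply: eq_card => t; rewrite !inE hash_x hash_y val_eqE.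
Qed.

End TableEntryCollision.

Lemma unif_prob_le_inv (T : finType) (E : pred T) (N : nat) :
  0 < N -> #|[pred t | E t]| * N <= #|T| -> (unif_prob E <= N%:R^-1)%R.
Proof.
move=> N_gt0 le_EN; rewrite /unif_prob; have [->|T_gt0] := posnP #|T|.
  by rewrite invr0 mulr0 invr_ge0 ler0n.
by rewrite ler_pdivrMr ?ltr0n // mulrC ler_pdivlMr ?ltr0n // -natrM ler_nat.
Qed.

Local Open Scope ring_scope.

Theorem lemma3p1 :
  forall d : nat, exists c : nat,
  forall (nmax W m K : nat) (I : finType) (fam : I -> {ffun 'I_K -> 'I_m})
         (S : {set 'I_(K * W ^ 4)}),
    (0 < nmax)%N ->
    (exists k : nat, W = 2 ^ k)%N ->
    (nmax ^ c <= W)%N ->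
    (W ^ c <= m)%N ->
    pairwise_indep fam ->
    (#|S| <= nmax)%N ->
    unif_prob
      (fun om : {ffun 'I_m -> {ffun 'I_(W ^ 3) -> {perm 'I_W}}} * I =>
         [exists x in S, exists y in S,
            (x != y) && (tab_hash om.1 (fam om.2) x == tab_hash om.1 (fam om.2) y)])
    <= ((nmax ^ d)%:R)^-1.
Proof.
move=> d; exists d.+3 => nmax W m K I fam S nmax_gt0 [k def_W] le_nmaxc_W le_Wc_m indep le_S.
have W_gt0 : (0 < W)%N by rewrite def_W expn_gt0.
have le_W_m : (W <= m)%N by apply: leq_trans le_Wc_m; rewrite -{1}(expn1 W) leq_pexp2l.
apply: unif_prob_le_inv; first by rewrite expn_gt0 nmax_gt0.
set collision := (X in #|X|).
(* The final estimate 2 nmax^2 <= nmax^3 needs nmax >= 2. *)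
have [le_S1|lt1S] := leqP #|S| 1.
  rewrite (eq_card0 (A := collision)) // => t; apply/existsP => -[x /andP[xS]].
  by case/existsP=> y /andP[yS]; rewrite (card_le1_eqP le_S1 x y xS yS) eqxx.
have le_collision_W : (#|collision| * W <= #|S| * (#|S| * (2 * #|{: table W m * I}|)))%N.
  apply: card_exists_mul_le => x _; apply: card_exists_mul_le => y _.
  have [<-|neq_xy] := eqVneq x y; first by rewrite (eq_card0 (A := [pred t | _])).
  apply: leq_trans (card_tab_hash_eq W_gt0 le_W_m indep neq_xy).
  by apply/eq_leq; congr (_ * W); apply: eq_card => t; rewrite !inE.
have nmax_gt1 : (1 < nmax)%N := leq_trans lt1S le_S.
rewrite -(@leq_pmul2r (nmax ^ 3)) ?expn_gt0 ?nmax_gt0 // -mulnA -expnD addn3.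
apply: leq_trans (leq_mul (leqnn _) le_nmaxc_W) _.
apply: leq_trans le_collision_W _.
rewrite [X in (_ <= X)%N]mulnC !(expnS nmax) expn0 muln1 -!mulnA.
by apply: leq_mul le_S (leq_mul le_S (leq_mul nmax_gt1 (leqnn _))).
Qed.
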